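(* Consider the network $N$ described in the context, with $3f < n \le 5f$. Let $X \in (A,B)$. Suppose the robots run any deterministic cautious algorithm. - If all Byzantine robots are located in $[A,X]$, then whenever the robots of $SetA$ are activated, their computed destinations lie in $[A,X]$. - Symmetrically, if all Byzantine robots are located in $[X,B]$, then whenever the robots of $SetB$ are activated, their computed destinations lie in $[X,B]$.
   Context: Model: robots on the real line in the ATOM model (each activated robot performs a full Look–Compute–Move cycle atomically). Robots are anonymous (same deterministic program), oblivious, have no common orientation, and have unlimited visibility with strong multiplicity detection (an observation is the multiset of all positions). Byzantine robots behave arbitrarily, with positions chosen by the adversary. Network $N$: there are $n$ robots, exactly $f$ of which are Byzantine, and $A<B$ are two points. - $SetA$: $f$ correct robots located at $A$. - $SetB$: $f$ correct robots located at $B$. - $SetX$: the remaining $n-3f$ correct robots, all at a common point $X \in (A,B)$. Cautious algorithm: for every time $t$ and every correct robot $i$, the last computed destination $D_i(t)$ lies in $[\min U^i(t), \max U^i(t)]$, where $U^i(t)$ is the multiset of positions of the correct robots in robot $i$'s last observation. In addition, whenever the correct robots are not all colocated, some correct robot later has a destination different from its position. *)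

From HB Require Import structures.
From mathcomp Require Import all_boot all_order all_algebra.
Set Implicit Arguments. Unset Strict Implicit. Unset Printing Implicit Defensive.
Import Order.TTheory GRing.Theory Num.Theory.
Local Open Scope ring_scope.

(* No common orientation: each robot observes in a local frame centred at
   its own position, with an orientation (flip : bool) chosen by the
   adversary.  Anonymity + strong multiplicity detection: the observation is
   the multiset of all positions, represented canonically as a sorted list.
   A deterministic oblivious algorithm is a function alg : seq R -> R from
   the (local) observation to the (local) destination. *)

Definition orient (R : realFieldType) (flip : bool) : R := if flip then -1 else 1.

Definition observe (R : realFieldType) (n : nat) (pos : 'I_n -> R) (i : 'I_n)
    (flip : bool) : seq R :=
  sort <=%R [seq orient R flip * (pos j - pos i) | j <- enum 'I_n].

Definition dest (R : realFieldType) (n : nat) (alg : seq R -> R)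
    (pos : 'I_n -> R) (i : 'I_n) (flip : bool) : R :=
  pos i + orient R flip * alg (observe pos i flip).

(* Safety part of cautiousness: in every configuration with exactly f
   Byzantine robots, every correct robot (in any local orientation) computes
   a destination in [min U, max U], U the positions of the correct robots. *)
Definition cautious (R : realFieldType) (n f : nat) (alg : seq R -> R) : Prop :=
  forall (pos : 'I_n -> R) (byz : {set 'I_n}), #|byz| = f ->
  forall i : 'I_n, i \notin byz -> forall flip : bool,
    (exists2 j, j \notin byz & pos j <= dest alg pos i flip) /\
    (exists2 k, k \notin byz & dest alg pos i flip <= pos k).

Definition network (R : realFieldType) (n f : nat) (A B X : R)
    (pos : 'I_n -> R) (byz setA setB : {set 'I_n}) : Prop :=
  [/\ #|byz| = f /\ #|setA| = f /\ #|setB| = f,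
      [disjoint byz & setA] /\ [disjoint byz & setB] /\ [disjoint setA & setB],
      (forall j, j \in setA -> pos j = A),
      (forall j, j \in setB -> pos j = B) &
      (forall j, j \notin byz -> j \notin setA -> j \notin setB -> pos j = X)].

From HB Require Import structures.
From mathcomp Require Import all_boot all_order all_algebra.
Set Implicit Arguments. Unset Strict Implicit. Unset Printing Implicit Defensive.
Import Order.TTheory GRing.Theory Num.Theory.
Local Open Scope ring_scope.

(* A robot of SetA cannot tell the actual configuration from the one in which
   SetB (also of size f) is the Byzantine set.  Cautiousness in that second
   reading confines its destination to the hull of the robots outside SetB,
   which are all in [A, X] when the true Byzantine robots are. *)

Lemma cautious_dest_within (R : realFieldType) (n f : nat) (alg : seq R -> R)
    (pos : 'I_n -> R) (F : {set 'I_n}) (a b : R) :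
  @cautious R n f alg -> #|F| = f ->
  (forall j, j \notin F -> a <= pos j <= b) ->
  forall i, i \notin F -> forall flip, a <= dest alg pos i flip <= b.
Proof.
move=> caut cardF hull i iF flip.
have [[j jF le_j] [k kF le_k]] := caut pos F cardF i iF flip.
have /andP[a_le _] := hull j jF; have /andP[_ le_b] := hull k kF.
by rewrite (le_trans a_le le_j) (le_trans le_k le_b).
Qed.

Section Network.

Variables (R : realFieldType) (n f : nat) (A B X : R) (pos : 'I_n -> R).
Variables (byz setA setB : {set 'I_n}).

Lemma network_sym :
  @network R n f A B X pos byz setA setB ->
  @network R n f B A X pos byz setB setA.
Proof.
case=> [[cb [cA cB]] [dbA [dbB dAB]] pA pB pX].
split=> //; first by rewrite [[disjoint setB & setA]]disjoint_sym.
by move=> j jb jB jA; apply: pX.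
Qed.

Lemma network_notin_setB_within (a b : R) :
  @network R n f A B X pos byz setA setB ->
  a <= A <= b -> a <= X <= b -> (forall j, j \in byz -> a <= pos j <= b) ->
  forall j, j \notin setB -> a <= pos j <= b.
Proof.
case=> _ _ pA _ pX hA hX hb j jB.
have [/hb //|jb] := boolP (j \in byz).
by have [/pA ->|jA] := boolP (j \in setA); last rewrite pX.
Qed.

End Network.

Theorem lemma1 (R : realFieldType) (n f : nat) (alg : seq R -> R)
    (A B X : R) (pos : 'I_n -> R) (byz setA setB : {set 'I_n}) :
  (3 * f < n)%N -> (n <= 5 * f)%N -> A < X -> X < B ->
  @cautious R n f alg ->
  @network R n f A B X pos byz setA setB ->
  ((forall j, j \in byz -> A <= pos j <= X) ->
     forall i, i \in setA -> forall flip : bool,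
       A <= dest alg pos i flip <= X) /\
  ((forall j, j \in byz -> X <= pos j <= B) ->
     forall i, i \in setB -> forall flip : bool,
       X <= dest alg pos i flip <= B).
Proof.
move=> _ _ /ltW AX /ltW XB caut net.
have net' := network_sym net.
have [[_ [cA cB]] [_ [_ dAB]] _ _ _] := net.
split=> hb i iS flip.
- apply: (cautious_dest_within caut cB); last by rewrite (disjointFr dAB iS).
  by apply: (network_notin_setB_within net); rewrite ?lexx ?AX.
- apply: (cautious_dest_within caut cA); last by rewrite (disjointFl dAB iS).
  by apply: (network_notin_setB_within net'); rewrite ?lexx ?XB.
Qed.
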